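(* Let $\pi$ be a group and $\rho\in\mathcal R(\pi,\widetilde{\mathrm{E}}_2)$. Let $s,t\in\pi$ be commuting elements generating a subgroup of $\pi$ isomorphic to $\mathbb Z\oplus\mathbb Z$. Then the rotational parts of $\rho(s)$ and $\rho(t)$ lie in $2\pi\mathbb Z$; equivalently their images in $\mathrm{E}_2$ are translations of $\mathbb R^2$ (and $\rho(s),\rho(t)$ act as translations of $\mathbb R^3$).
   Context: $\widetilde{\mathrm{E}}_2$ is $\mathbb R^3$ with coordinates $((x,y),\theta)$ and product $((x_0,y_0),\theta_0)\cdot((x,y),\theta)=(R_{\theta_0}(x,y)^T+(x_0,y_0)^T,\theta_0+\theta)$, $R_{\theta_0}$ the rotation matrix by angle $\theta_0$; $(x,y)$ is the translational part and $\theta$ the rotational part. It is the universal cover of $\mathrm{E}_2$, the group of orientation-preserving isometries of $\mathbb R^2$. $\mathcal R(\pi,\widetilde{\mathrm{E}}_2)$ is the set of faithful homomorphisms $\pi\to\widetilde{\mathrm{E}}_2$ with discrete cocompact image. *)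

From HB Require Import structures.
From mathcomp Require Import all_boot all_order all_algebra.
From mathcomp Require Import all_classical all_reals all_analysis.
Set Implicit Arguments. Unset Strict Implicit. Unset Printing Implicit Defensive.
Import Order.TTheory GRing.Theory Num.Theory.
Import numFieldNormedType.Exports.
Local Open Scope classical_set_scope.
Local Open Scope ring_scope.

Record group := Group {
  gcar :> Type;
  gmul : gcar -> gcar -> gcar;
  gone : gcar;
  ginv : gcar -> gcar;
  gmulA : forall x y z, gmul x (gmul y z) = gmul (gmul x y) z;
  gmul1 : forall x, gmul gone x = x;
  gmulV : forall x, gmul (ginv x) x = gone }.

Definition is_subgroup (G : group) (H : set G) : Prop :=
  H (gone G) /\ (forall x y, H x -> H y -> H (gmul x y)) /\
  (forall x, H x -> H (ginv x)).

Definition gen_subgroup (G : group) (A : set G) : set G :=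
  fun x => forall H : set G, is_subgroup H -> A `<=` H -> H x.

Definition gen_iso_ZZ (G : group) (s t : G) : Prop :=
  exists f : int * int -> G,
    (forall a b : int * int, f (a.1 + b.1, a.2 + b.2) = gmul (f a) (f b)) /\
    injective f /\
    range f = gen_subgroup [set x | x = s \/ x = t].

(* The universal cover E2~ of E2: R^3 with coordinates ((x,y),theta). *)
Notation E2t R := ((R * R) * R)%type.

Definition E2t_mul (R : realType) (g h : E2t R) : E2t R :=
  let: ((x0, y0), th0) := g in
  let: ((x, y), th) := h in
  ((cos th0 * x - sin th0 * y + x0, sin th0 * x + cos th0 * y + y0), th0 + th).

Definition discrete_subset (R : realType) (S : set (E2t R)) : Prop :=
  forall g, S g -> exists U : set (E2t R), nbhs g U /\ U `&` S = [set g].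

Definition cocompact_subset (R : realType) (S : set (E2t R)) : Prop :=
  exists K : set (E2t R), compact K /\
    forall g : E2t R, exists gam k, S gam /\ K k /\ g = E2t_mul gam k.

(* R(pi, E2~): faithful homomorphisms with discrete cocompact image. *)
Definition in_RE2t (R : realType) (G : group) (rho : G -> E2t R) : Prop :=
  (forall a b, rho (gmul a b) = E2t_mul (rho a) (rho b)) /\
  injective rho /\
  discrete_subset (range rho) /\ cocompact_subset (range rho).

Definition rot_part (R : realType) (g : E2t R) : R := g.2.

From mathcomp Require Import all_boot all_order all_algebra.
From mathcomp Require Import all_classical all_reals all_analysis.
From mathcomp Require Import ring lra.
Import Order.TTheory GRing.Theory Num.Theory numFieldNormedType.Exports.
Local Open Scope ring_scope.

(* Suppose the image (v, th) of s had a genuine rotation, cos th <> 1.  For any h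
   commuting with s, with image (w, ph), comparing translational parts gives
   (1 - cos th) |w|^2 = (1 - cos ph) |v|^2: in the centralizer of s, a small
   rotational part forces a small translational part, so by discreteness of the
   image and faithfulness only the identity has small rotational part.  But the
   rotational parts of the images of Z (+) Z = <s, t> form the group Z a + Z b in R,
   which by Dirichlet's pigeonhole argument contains nonzero elements m a + n b of
   arbitrarily small absolute value.  Hence cos th = 1, that is th \in 2 pi Z. *)

Lemma periodicz {U V : zmodType} {f : U -> V} {T : U} :
  periodic f T -> forall (k : int) a, f (a + T *~ k) = f a.
Proof.
move=> fT [] n a; first exact: periodicn.
by rewrite NegzE mulrNz -pmulrn -(periodicn fT n.+1 (a - T *+ n.+1)) subrK.
Qed.

Lemma cos_eq1 {R : realType} (x : R) : cos x = 1 -> exists k : int, x = 2 * pi * k%:~R.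
Proof.
move=> cx; have pi0 : 0 < pi :> R := pi_gt0 R.
have pi2E : 2 * pi = pi *+ 2 :> R by rewrite mulr_natl.
(* [k] is chosen so that [y := x - 2 pi k] lies in [[-pi, pi)]. *)
pose k := Num.floor ((x + pi) / (2 * pi)).
have /andP[lek ltk] := floor_itv ((x + pi) / (2 * pi)); rewrite -/k in lek ltk.
rewrite ler_pdivlMr ?mulr_gt0 // in lek; rewrite ltr_pdivrMr ?mulr_gt0 // intrD in ltk.
pose y := x - 2 * pi * k%:~R.
have y_bound : `|y| <= pi by rewrite ler_norml; apply/andP; split; rewrite /y; nra.
have cy : cos `|y| = cos 0.
  by rewrite cos_norm cos0 -(periodicz (@cosD2pi R) k) -pi2E -mulrzr /y subrK.
have /normr0_eq0 y0 : `|y| = 0.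
  by apply: cos_inj cy; rewrite in_itv /= ?normr_ge0 ?pi_ge0 ?lexx.
by exists k; apply/eqP; rewrite -subr_eq0; apply/eqP.
Qed.

Lemma pigeonhole_unit_interval {R : archiRealFieldType} (M : nat) {y : nat -> R} :
  (forall k, 0 <= y k < 1) ->
  exists k l : 'I_M.+2, k != l /\ `|y k - y l| < M.+1%:R^-1.
Proof.
move=> y01; pose bin (k : 'I_M.+2) : 'I_M.+1 := inord (Num.truncn (y k * M.+1%:R)).
have binE k : (bin k : nat) = Num.truncn (y k * M.+1%:R).
  have /andP[y0 y1] := y01 k.
  rewrite inordK // ltnS -ltnS truncn_lt_nat ?mulr_ge0 //.
  by rewrite -{2}[M.+1%:R]mul1r ltr_pM2r ?ltr0n.
have /injectivePn [k [l kl same_bin]] : ~~ injectiveb bin.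
  by apply/injectiveP => /leq_card; rewrite !card_ord ltnn.
exists k, l; split=> //.
have M0 : 0 < M.+1%:R :> R by rewrite ltr0n.
rewrite -[X in _ < X]mul1r ltr_pdivlMr // -[M.+1%:R]ger0_norm ?ltW // -normrM mulrBl.
have /andP[yk0 _] := y01 k; have /andP[yl0 _] := y01 l.
have := truncn_itv (mulr_ge0 yk0 (ltW M0)); have := truncn_itv (mulr_ge0 yl0 (ltW M0)).
rewrite -!binE same_bin -natr1 => /andP[? ?] /andP[? ?].
by rewrite ltr_norml; apply/andP; split; lra.
Qed.

Lemma dirichlet_small_combination {R : archiRealFieldType} (a b d : R) : 0 < d ->
  exists m n : int, (m, n) != (0, 0) /\ `|m%:~R * a + n%:~R * b| < d.
Proof.
move=> d0; have [->|b0] := eqVneq b 0.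
  by exists 0, 1; rewrite mulr0 mul0r addr0 normr0.
pose M := Num.truncn (`|b| / d).
pose y (k : nat) : R := k%:R * a / b - (Num.floor (k%:R * a / b))%:~R.
have y01 k : 0 <= y k < 1.
  by rewrite /y subr_ge0 floor_le ltrBlDl -[1]/(1%:~R) -intrD floorD1_gt.
have [k [l [kl ykl]]] := pigeonhole_unit_interval M y01.
exists (k%:Z - l%:Z), (Num.floor (l%:R * a / b) - Num.floor (k%:R * a / b)); split.
  by rewrite xpair_eqE negb_and subr_eq0 eqz_nat kl.
have -> : (k%:Z - l%:Z)%:~R * a + (Num.floor (l%:R * a / b) - Num.floor (k%:R * a / b))%:~R * b
    = b * (y k - y l) by rewrite !intrB /y; field.
have bpos : 0 < `|b| by rewrite normr_gt0.
rewrite normrM; apply: (lt_trans (y := `|b| * M.+1%:R^-1)); first by rewrite ltr_pM2l.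
rewrite ltr_pdivrMr ?ltr0n // -ltr_pdivrMl // mulrC.
by case/andP: (truncn_itv (divr_ge0 (normr_ge0 b) (ltW d0))).
Qed.

Lemma int_additiveE {V : zmodType} (h : int -> V) :
  {morph h : m n / m + n} -> forall m, h m = h 1 *~ m.
Proof.
move=> hD; have h0 : h 0 = 0 by apply: (@addrI _ (h 0)); rewrite -hD !addr0.
have hn (n : nat) : h n = h 1 *~ n.
  by elim: n => [|n IH]; rewrite ?h0 // -addn1 PoszD hD IH -!pmulrn addn1 mulrSr.
case=> n; first exact: hn.
by apply: (@addrI _ (h n.+1)); rewrite -hD NegzE addrN h0 hn -pmulrn mulrNz addrN.
Qed.

Lemma gmul_idem {G : group} (x : G) : gmul x x = x -> x = gone G.
Proof. by move=> xx; rewrite -(gmul1 x) -(gmulV x) -gmulA xx. Qed.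

Lemma E2t_rot_mul {R : realType} (g h : E2t R) :
  rot_part (E2t_mul g h) = rot_part g + rot_part h.
Proof. by case: g => [[? ?] ?]; case: h => [[? ?] ?]. Qed.

Lemma E2t_mul_idem {R : realType} (g : E2t R) : E2t_mul g g = g -> g = ((0, 0), 0).
Proof.
case: g => [[x y] th] [ex ey eth].
have th0 : th = 0 by lra.
move: ex ey; rewrite th0 cos0 sin0 !mul1r !mul0r subr0 add0r => ex ey.
by congr (_, _, _); lra.
Qed.

Lemma E2t_commute_sqnorm {R : realType} (v1 v2 th w1 w2 ph : R) :
  E2t_mul ((v1, v2), th) ((w1, w2), ph) = E2t_mul ((w1, w2), ph) ((v1, v2), th) ->
  (1 - cos th) * (w1 ^+ 2 + w2 ^+ 2) = (1 - cos ph) * (v1 ^+ 2 + v2 ^+ 2).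
Proof.
case=> ex ey _; have trig_th := cos2Dsin2 th; have trig_ph := cos2Dsin2 ph.
(* A combination of the coordinate equations [dx = 0], [dy = 0] and of [cos^2 + sin^2 = 1]. *)
pose dx := cos th * w1 - sin th * w2 + v1 - (cos ph * v1 - sin ph * v2 + w1).
pose dy := sin th * w1 + cos th * w2 + v2 - (sin ph * v1 + cos ph * v2 + w2).
have : 2 * ((1 - cos th) * (w1 ^+ 2 + w2 ^+ 2) - (1 - cos ph) * (v1 ^+ 2 + v2 ^+ 2))
  = dx * ((cos th - 1) * w1 - sin th * w2 + (cos ph - 1) * v1 - sin ph * v2)
  + dy * (sin th * w1 + (cos th - 1) * w2 + sin ph * v1 + (cos ph - 1) * v2)
  - (cos th ^+ 2 + sin th ^+ 2 - 1) * (w1 ^+ 2 + w2 ^+ 2)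
  + (cos ph ^+ 2 + sin ph ^+ 2 - 1) * (v1 ^+ 2 + v2 ^+ 2) by rewrite /dx /dy; ring.
rewrite /dx /dy ex ey trig_th trig_ph !subrr !mul0r subr0 addr0; lra.
Qed.

Lemma cos_near0 {R : realType} (e : R) : 0 < e ->
  exists2 d : R, 0 < d & forall x, `|x| < d -> 1 - cos x < e.
Proof.
move=> e0; have := cvgr_dist_lt _ _ (@continuous_cos R 0) _ e0; rewrite cos0.
move=> near0; have [d d0 ball_near0] := (nbhs_ballP _ _).1 (near0 _).
exists d => // x dx.
apply: le_lt_trans (ler_norm _) (ball_near0 x _).
by rewrite /ball /= sub0r normrN.
Qed.

Section DiscreteRepresentation.
Context {R : realType} {G : group} {rho : G -> E2t R}.
Hypothesis rho_hom : forall a b, rho (gmul a b) = E2t_mul (rho a) (rho b).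
Hypothesis rho_inj : injective rho.
Hypothesis rho_discrete : discrete_subset (range rho).

Lemma rho_one : rho (gone G) = ((0, 0), 0).
Proof. by apply: E2t_mul_idem; rewrite -rho_hom gmul1. Qed.

Lemma rho_small_trivial : exists2 e : R, 0 < e & forall g,
  `|(rho g).1.1| < e -> `|(rho g).1.2| < e -> `|rot_part (rho g)| < e -> g = gone G.
Proof.
have [U [U1 UI]] := rho_discrete _ (imageT rho (gone G)); rewrite rho_one in U1 UI.
have [e e0 ballU] := (nbhs_ballP _ _).1 U1.
exists e => // g g1 g2 g3; apply: rho_inj; rewrite rho_one.
suff : (U `&` range rho)%classic (rho g) by rewrite UI.
split; last exact: imageT.
by apply: ballU; split; [split|] => /=; rewrite /ball /= sub0r normrN.
Qed.

Lemma centralizer_small_rot_trivial (g : G) : cos (rot_part (rho g)) != 1 ->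
  exists2 d : R, 0 < d & forall h, gmul g h = gmul h g ->
    `|rot_part (rho h)| < d -> h = gone G.
Proof.
have [e e0 small] := rho_small_trivial.
case Eg : (rho g) => [[v1 v2] th] /= cos_ne1.
have K0 : 0 < 1 - cos th by rewrite subr_gt0 lt_neqAle cos_ne1 cos_le1.
pose V := v1 ^+ 2 + v2 ^+ 2.
have V0 : 0 <= V by rewrite addr_ge0 ?sqr_ge0.
pose eta := (1 - cos th) * e ^+ 2 / (V + 1).
have etaE : eta * (V + 1) = (1 - cos th) * e ^+ 2.
  by rewrite divfK // gt_eqF // ltr_wpDl.
have eta0 : 0 < eta by rewrite divr_gt0 ?mulr_gt0 ?exprn_gt0 // ltr_wpDl.
have [d d0 near0] := cos_near0 _ eta0.
exists (Num.min d e) => [|h gh]; first by rewrite lt_min d0 e0.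
have := congr1 rho gh; rewrite !rho_hom Eg.
case Eh : (rho h) => [[w1 w2] ph] /E2t_commute_sqnorm comm.
rewrite lt_min => /andP[ph_d ph_e].
have ph_small := near0 _ ph_d.
have W_lt : w1 ^+ 2 + w2 ^+ 2 < e ^+ 2.
  rewrite -(ltr_pM2l K0) comm -etaE.
  by apply: le_lt_trans (_ : eta * V < _); [rewrite ler_wpM2r // ltW | nra].
have sq_lt (w : R) : w ^+ 2 < e ^+ 2 -> `|w| < e.
  by move=> ?; rewrite ltr_norml; apply/andP; split; nra.
apply: small; rewrite Eh //= sq_lt //.
  by apply: le_lt_trans W_lt; rewrite lerDl sqr_ge0.
by apply: le_lt_trans W_lt; rewrite lerDr sqr_ge0.
Qed.

Context {f : int * int -> G}.
Hypothesis f_hom : forall a b : int * int, f (a.1 + b.1, a.2 + b.2) = gmul (f a) (f b).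
Hypothesis f_inj : injective f.

Lemma rot_rep_ZZ_linear (m n : int) : rot_part (rho (f (m, n))) =
  m%:~R * rot_part (rho (f (1, 0))) + n%:~R * rot_part (rho (f (0, 1))).
Proof.
have rotD a b : rot_part (rho (f (a.1 + b.1, a.2 + b.2))) =
    rot_part (rho (f a)) + rot_part (rho (f b)) by rewrite f_hom rho_hom E2t_rot_mul.
have rot_m (k : int) : rot_part (rho (f (k, 0))) = k%:~R * rot_part (rho (f (1, 0))).
  rewrite mulrzl; apply: (@int_additiveE _ (fun j => rot_part (rho (f (j, 0))))).
  by move=> x y; rewrite -rotD /= addr0.
have rot_n (k : int) : rot_part (rho (f (0, k))) = k%:~R * rot_part (rho (f (0, 1))).
  rewrite mulrzl; apply: (@int_additiveE _ (fun j => rot_part (rho (f (0, j))))).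
  by move=> x y; rewrite -rotD /= addr0.
by have := rotD (m, 0) (0, n); rewrite /= addr0 add0r rot_m rot_n.
Qed.

Lemma cos_rot_rep_ZZ (a : int * int) : cos (rot_part (rho (f a))) = 1.
Proof.
have [//|cos_ne1] := eqVneq (cos (rot_part (rho (f a)))) 1; exfalso.
have [d d0 gap] := centralizer_small_rot_trivial _ cos_ne1.
have [m [n [/negP mn0 small]]] :=
  dirichlet_small_combination (rot_part (rho (f (1, 0)))) (rot_part (rho (f (0, 1)))) _ d0.
have f0 : f (0, 0) = gone G by apply: gmul_idem; rewrite -f_hom /= addr0.
apply/mn0/eqP/f_inj; rewrite f0; apply: gap; last by rewrite rot_rep_ZZ_linear.
by rewrite -!f_hom /= addrC [a.2 + _]addrC.
Qed.

End DiscreteRepresentation.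

Theorem lemma5 (R : realType) (G : group) (rho : G -> E2t R) (s t : G) :
  in_RE2t rho ->
  gmul s t = gmul t s ->
  gen_iso_ZZ s t ->
  (exists k : int, rot_part (rho s) = 2 * pi * k%:~R) /\
  (exists k : int, rot_part (rho t) = 2 * pi * k%:~R).
Proof.
move=> [rho_hom [rho_inj [rho_discrete _]]] _ [f [f_hom [f_inj f_range]]].
have in_range x : x = s \/ x = t -> exists a, f a = x.
  move=> st; have [a _ <-] : range f x by rewrite f_range => H _; apply.
  by exists a.
have [a <-] := in_range s (or_introl erefl).
have [b <-] := in_range t (or_intror erefl).
by split; apply: cos_eq1; exact: (cos_rot_rep_ZZ rho_hom rho_inj rho_discrete f_hom f_inj).
Qed.
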